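(* For $m>2$ there is an injective $\mathcal R$-morphism $g:C_m\to C_2$ such that for all $i,j<m$, \[ g(p_i)\cdot g(q_j)=\delta_{i,j}\quad\text{and}\quad g\Big(\sum_{i<m}q_ip_i\Big)=1. \]
   Context: An $\mathcal R$-dioid is a dioid in which every regular subset of the multiplicative monoid has a supremum $\sum A$ with $\sum(AB)=(\sum A)(\sum B)$ (equivalently a $*$-continuous Kleene algebra); an $\mathcal R$-morphism is a dioid morphism preserving suprema of regular sets; an $\mathcal R$-congruence is a semiring congruence $\rho$ such that regular sets with equal downward closures modulo $\rho$ have congruent suprema. For $k\ge1$, $\Delta_k=\{p_0,\dots,p_{k-1},q_0,\dots,q_{k-1}\}$ and the bra-ket $\mathcal R$-dioid is $C_k=\mathcal R\Delta_k^*/\rho_k$, where $\mathcal R\Delta_k^*$ is the algebra of regular languages over $\Delta_k$ and $\rho_k$ the least $\mathcal R$-congruence containing $p_iq_j=\delta_{i,j}$ ($i,j<k$) and $\sum_{i<k}q_ip_i=1$. In $C_m$, $p_i,q_j$ denote the classes of $\{p_i\},\{q_j\}$; $\delta$ is the Kronecker delta. *)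

From Stdlib Require List.
From mathcomp Require Import all_boot.
Set Implicit Arguments. Unset Strict Implicit. Unset Printing Implicit Defensive.

(* A monoid is given by a carrier T, an equivalence E (its equality), a product mul
   and a unit one. *)
Inductive rexp (T : Type) : Type :=
  | Rzero
  | Ratom of T
  | Rplus of rexp T & rexp T
  | Rmul of rexp T & rexp T
  | Rstar of rexp T.
Arguments Rzero {T}.

Fixpoint rsem (T : Type) (E : T -> T -> Prop) (mul : T -> T -> T) (one : T)
    (r : rexp T) : T -> Prop :=
  match r with
  | Rzero => fun _ => False
  | Ratom a => fun x => E x a
  | Rplus r1 r2 => fun x => rsem E mul one r1 x \/ rsem E mul one r2 x
  | Rmul r1 r2 => fun x => exists y z,
      [/\ rsem E mul one r1 y, rsem E mul one r2 z & E x (mul y z)]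
  | Rstar r1 => fun x => exists ys : seq T,
      (forall y, List.In y ys -> rsem E mul one r1 y) /\ E x (foldr mul one ys)
  end.

Definition regular_subset (T : Type) (E : T -> T -> Prop) (mul : T -> T -> T)
    (one : T) (A : T -> Prop) : Prop :=
  exists r : rexp T, forall x, A x <-> rsem E mul one r x.

Definition dle (T : Type) (E : T -> T -> Prop) (add : T -> T -> T) (a b : T) :=
  E (add a b) b.

Definition is_sup (T : Type) (E : T -> T -> Prop) (add : T -> T -> T)
    (A : T -> Prop) (s : T) : Prop :=
  (forall a, A a -> dle E add a s) /\
  (forall u, (forall a, A a -> dle E add a u) -> dle E add s u).

(* p_i is inl i, q_i is inr i *)
Definition Delta (k : nat) : Type := ('I_k + 'I_k)%type.

Definition lang (k : nat) := seq (Delta k) -> Prop.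

Definition regular_lang (k : nat) (L : lang k) : Prop :=
  regular_subset (@eq (seq (Delta k))) cat [::] L.

Definition RL (k : nat) := {L : lang k | regular_lang L}.

Definition lang_union k (L1 L2 : lang k) : lang k := fun w => L1 w \/ L2 w.
Definition lang_cat k (L1 L2 : lang k) : lang k :=
  fun w => exists u v, [/\ L1 u, L2 v & w = u ++ v].
Definition lang_empty k : lang k := fun _ => False.
Definition lang_word k (w0 : seq (Delta k)) : lang k := fun w => w = w0.

Lemma regular_union k (L1 L2 : lang k) :
  regular_lang L1 -> regular_lang L2 -> regular_lang (lang_union L1 L2).
Proof.
move=> [r1 H1] [r2 H2]; exists (Rplus r1 r2) => w /=.
by rewrite /lang_union H1 H2.
Qed.

Lemma regular_cat k (L1 L2 : lang k) :
  regular_lang L1 -> regular_lang L2 -> regular_lang (lang_cat L1 L2).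
Proof.
move=> [r1 H1] [r2 H2]; exists (Rmul r1 r2) => w /=; split.
- by move=> [u [v [Hu Hv ->]]]; exists u, v; split; [apply/H1|apply/H2|].
- by move=> [u [v [Hu Hv ->]]]; exists u, v; split; [apply/H1|apply/H2|].
Qed.

Lemma regular_empty k : regular_lang (@lang_empty k).
Proof. by exists Rzero. Qed.

Lemma regular_word k (w0 : seq (Delta k)) : regular_lang (lang_word w0).
Proof. by exists (Ratom w0). Qed.

Definition radd k (x y : RL k) : RL k :=
  exist _ _ (regular_union (proj2_sig x) (proj2_sig y)).
Definition rmul k (x y : RL k) : RL k :=
  exist _ _ (regular_cat (proj2_sig x) (proj2_sig y)).
Definition rzero k : RL k := exist _ _ (@regular_empty k).
Definition rone k : RL k := exist _ _ (@regular_word k [::]).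

Definition rp k (i : 'I_k) : RL k := exist _ _ (regular_word [:: inl i]).
Definition rq k (i : 'I_k) : RL k := exist _ _ (regular_word [:: inr i]).

Definition kdelta k (i j : 'I_k) : RL k := if i == j then rone k else rzero k.

Definition sum_qp k : RL k := \big[@radd k/rzero k]_(i < k) rmul (rq i) (rp i).

Definition downclosure k (rho : RL k -> RL k -> Prop) (A : RL k -> Prop) :
    RL k -> Prop :=
  fun x => exists a, A a /\ rho (radd x a) a.

Definition R_congruence k (rho : RL k -> RL k -> Prop) : Prop :=
  [/\ (forall x, rho x x),
      (forall x y, rho x y -> rho y x),
      (forall x y z, rho x y -> rho y z -> rho x z),
      (forall a a' b b', rho a a' -> rho b b' ->
          rho (radd a b) (radd a' b') /\ rho (rmul a b) (rmul a' b')) &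
      (forall (A B : RL k -> Prop),
          regular_subset (@eq (RL k)) (@rmul k) (rone k) A ->
          regular_subset (@eq (RL k)) (@rmul k) (rone k) B ->
          (forall x, downclosure rho A x <-> downclosure rho B x) ->
          forall s t, is_sup (@eq (RL k)) (@radd k) A s ->
                      is_sup (@eq (RL k)) (@radd k) B t -> rho s t)].

Definition contains_braket k (rho : RL k -> RL k -> Prop) : Prop :=
  (forall i j : 'I_k, rho (rmul (rp i) (rq j)) (kdelta i j)) /\
  rho (sum_qp k) (rone k).

Definition rho_k k (x y : RL k) : Prop :=
  forall rho, R_congruence rho -> contains_braket rho -> rho x y.

(* ---------- C_k = R Delta_k^* / rho_k, presented as a setoid ---------- *)
(* A map C_m -> C_2 is given by a map on representatives respecting rho. *)
Definition R_morphism m n (g : RL m -> RL n) : Prop :=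
  (forall x y, rho_k x y -> rho_k (g x) (g y)) /\
  [/\ rho_k (g (rzero m)) (rzero n),
      rho_k (g (rone m)) (rone n),
      (forall x y, rho_k (g (radd x y)) (radd (g x) (g y))),
      (forall x y, rho_k (g (rmul x y)) (rmul (g x) (g y))) &
      (forall A : RL m -> Prop,
          regular_subset (@rho_k m) (@rmul m) (rone m) A ->
          forall s, is_sup (@rho_k m) (@radd m) A s ->
          is_sup (@rho_k n) (@radd n) (fun y => exists2 x, A x & rho_k y (g x)) (g s))].

Definition C_injective m n (g : RL m -> RL n) : Prop :=
  forall x y, rho_k (g x) (g y) -> rho_k x y.

(* Let c_0 = 0, c_1 = 10, ..., c_(m-2) = 1^(m-2) 0, c_(m-1) = 1^(m-1) be the
   complete binary prefix code with m words, and let g substitute the word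
   q_(c_i) for q_i and p_(rev c_i) for p_i.  As the code is prefix-free,
   g(p_i) g(q_j) = delta_ij in C_2; as it is complete, sum_i q_(c_i) p_(rev c_i)
   telescopes to 1.  So the pullback of rho_2 along g is an R-congruence
   containing the bra-ket relations of C_m, hence contains rho_m: g is a
   well-defined R-morphism.

   For injectivity, C_2 acts by relations on states (an infinite binary stream
   and an integer height), p_i pushing i and q_i popping i, and rho_2-equivalent
   elements act alike.  Every word of C_m is 0 or a normal form q_u p_v, and a
   Koenig-style argument on the stream coding an infinite branch of expansions
   q_u p_v = sum_i q_(u i) p_(i v) shows that q_u p_v lies below y as soon as
   g(q_u p_v) acts inside g(y). *)

From HB Require Import structures.
From mathcomp Require Import all_boot zify.
From Stdlib Require List.
From Stdlib Require Import FunctionalExtensionality PropExtensionality.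
From Stdlib Require Import ProofIrrelevance ZArith Lia Classical ClassicalEpsilon.

Set Implicit Arguments. Unset Strict Implicit. Unset Printing Implicit Defensive.

(** * Regular languages as an R-dioid *)

Section RationalImage.
Variables (T1 T2 : Type) (mul1 : T1 -> T1 -> T1) (one1 : T1).
Variables (mul2 : T2 -> T2 -> T2) (one2 : T2) (f : T1 -> T2).
Hypothesis f_mul : forall a b, f (mul1 a b) = mul2 (f a) (f b).
Hypothesis f_one : f one1 = one2.

Fixpoint rmap (r : rexp T1) : rexp T2 :=
  match r with
  | Rzero => Rzero
  | Ratom a => Ratom (f a)
  | Rplus r1 r2 => Rplus (rmap r1) (rmap r2)
  | Rmul r1 r2 => Rmul (rmap r1) (rmap r2)
  | Rstar r1 => Rstar (rmap r1)
  end.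

Lemma foldr_morph xs : foldr mul2 one2 (map f xs) = f (foldr mul1 one1 xs).
Proof. by elim: xs => [|x xs IH] /=; rewrite ?f_one // IH f_mul. Qed.

Lemma rsem_rmap r y :
  rsem eq mul2 one2 (rmap r) y <-> exists2 x, rsem eq mul1 one1 r x & y = f x.
Proof.
elim: r y => [|a|r1 IH1 r2 IH2|r1 IH1 r2 IH2|r1 IH1] y /=.
- by split => // [[x []]].
- by split => [->|[x -> ->]]; first by exists a.
- rewrite IH1 IH2; split.
  + by case=> [[x Hx ->]|[x Hx ->]]; exists x => //; [left|right].
  + by case=> x [Hx|Hx] ->; [left|right]; exists x.
- split.
  + case=> [y1 [y2 [/IH1 [x1 H1 ->] /IH2 [x2 H2 ->] ->]]].
    by exists (mul1 x1 x2); [exists x1, x2|rewrite f_mul].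
  + case=> x [x1 [x2 [H1 H2 ->]]] ->; exists (f x1), (f x2); split.
    * by apply/IH1; exists x1.
    * by apply/IH2; exists x2.
    * by rewrite f_mul.
- split.
  + case=> ys [Hys ->].
    have [xs Hxs ->] : exists2 xs, (forall x, List.In x xs -> rsem eq mul1 one1 r1 x)
                                   & ys = map f xs.
      elim: ys Hys => [|y0 ys IH] Hys; first by exists [::].
      have [x0 Hx0 ->] := proj1 (IH1 y0) (Hys y0 (or_introl erefl)).
      have [xs Hxs ->] := IH (fun y Hy => Hys y (or_intror Hy)).
      by exists (x0 :: xs) => //= x [<-|/Hxs].
    by exists (foldr mul1 one1 xs); [exists xs|rewrite foldr_morph].
  + case=> x [xs [Hxs ->]] ->; exists (map f xs); split; last by rewrite foldr_morph.
    by move=> _ /List.in_map_iff [x' [<- /Hxs Hx']]; apply/IH1; exists x'.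
Qed.

End RationalImage.

Lemma regular_ext k (L L' : lang k) :
  (forall w, L w <-> L' w) -> regular_lang L -> regular_lang L'.
Proof. by move=> E [r Hr]; exists r => w; rewrite -E. Qed.

Section RegularLanguages.
Variable k : nat.
Implicit Types x y z : RL k.

Lemma RL_ext x y : (forall w, sval x w <-> sval y w) -> x = y.
Proof.
case: x y => [L1 H1] [L2 H2] /= E.
have {}E : L1 = L2.
  by apply: functional_extensionality => w; apply: propositional_extensionality.
by subst L2; congr exist; apply: proof_irrelevance.
Qed.

Definition rword (w : seq (Delta k)) : RL k := exist _ _ (regular_word w).

Lemma raddC x y : radd x y = radd y x.
Proof. by apply: RL_ext => w /=; rewrite /lang_union; tauto. Qed.
Lemma raddA x y z : radd x (radd y z) = radd (radd x y) z.
Proof. by apply: RL_ext => w /=; rewrite /lang_union; tauto. Qed.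
Lemma raddid x : radd x x = x.
Proof. by apply: RL_ext => w /=; rewrite /lang_union; tauto. Qed.
Lemma radd0r x : radd (rzero k) x = x.
Proof. by apply: RL_ext => w /=; rewrite /lang_union /lang_empty; tauto. Qed.

Lemma rmul1r x : rmul (rone k) x = x.
Proof.
apply: RL_ext => w /=; rewrite /lang_cat /lang_word.
by split => [[u [v [-> Hv ->]]] // | Hw]; exists [::], w.
Qed.
Lemma rmul0r x : rmul (rzero k) x = rzero k.
Proof. by apply: RL_ext => w /=; split => // [[u [v []]]]. Qed.
Lemma rmulr0 x : rmul x (rzero k) = rzero k.
Proof. by apply: RL_ext => w /=; split => // [[u [v []]]]. Qed.
Lemma rmulDl x y z : rmul (radd x y) z = radd (rmul x z) (rmul y z).
Proof.
apply: RL_ext => w /=; rewrite /lang_cat /lang_union; split.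
- by case=> u [v [[Hu|Hu] Hv ->]]; [left|right]; exists u, v.
- by case=> [[u [v [Hu Hv ->]]]|[u [v [Hu Hv ->]]]]; exists u, v; split => //; [left|right].
Qed.
Lemma rmulDr x y z : rmul x (radd y z) = radd (rmul x y) (rmul x z).
Proof.
apply: RL_ext => w /=; rewrite /lang_cat /lang_union; split.
- by case=> u [v [Hu [Hv|Hv] ->]]; [left|right]; exists u, v.
- by case=> [[u [v [Hu Hv ->]]]|[u [v [Hu Hv ->]]]]; exists u, v; split => //; [left|right].
Qed.

Lemma rword_cat a b : rmul (rword a) (rword b) = rword (a ++ b).
Proof.
apply: RL_ext => w /=; rewrite /lang_cat /lang_word.
by split => [[u [v [-> -> ->]]] // | ->]; exists a, b.
Qed.

End RegularLanguages.

HB.instance Definition _ k := Monoid.isComLaw.Build (RL k) (rzero k) (@radd k)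
  (@raddA k) (@raddC k) (@radd0r k).
HB.instance Definition _ k := Monoid.isMulLaw.Build (RL k) (rzero k) (@rmul k)
  (@rmul0r k) (@rmulr0 k).
HB.instance Definition _ k := Monoid.isAddLaw.Build (RL k) (@rmul k) (@radd k)
  (@rmulDl k) (@rmulDr k).

Section RegularSups.
Variable k : nat.
Implicit Types x y z : RL k.

Lemma sval_big (I : eqType) (r : seq I) (F : I -> RL k) w :
  sval (\big[@radd k/rzero k]_(i <- r) F i) w <-> exists2 i, i \in r & sval (F i) w.
Proof.
elim: r => [|i r IH]; first by rewrite big_nil; split => // [[i]].
rewrite big_cons /= /lang_union IH; split.
- by case=> [H|[j Hj H]]; [exists i; rewrite ?mem_head|exists j; rewrite // inE Hj orbT].
- by case=> j; rewrite inE => /orP [/eqP <-|Hj] H; [left|right; exists j].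
Qed.

Definition lang_star (L : lang k) : lang k :=
  fun w => exists ws, (forall v, List.In v ws -> L v) /\ w = foldr cat [::] ws.

Lemma regular_star (L : lang k) : regular_lang L -> regular_lang (lang_star L).
Proof.
move=> [r Hr]; exists (Rstar r) => w /=; rewrite /lang_star.
by split; case=> ws [Hws ->]; exists ws; split => // v /Hws /Hr.
Qed.

Notation rsemRL := (rsem (@eq (RL k)) (@rmul k) (rone k)).

Definition lang_runion (r : rexp (RL k)) : lang k :=
  fun w => exists2 a, rsemRL r a & sval a w.

Lemma regular_runion r : regular_lang (lang_runion r).
Proof.
rewrite /lang_runion; elim: r => [|a|r1 IH1 r2 IH2|r1 IH1 r2 IH2|r1 IH1] /=.
- by apply: regular_ext (@regular_empty k) => w; split => // [[a []]].
- apply: regular_ext (proj2_sig a) => w.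
  by split => [H|[b -> //]]; exists a.
- apply: regular_ext (regular_union IH1 IH2) => w; rewrite /lang_union; split.
  + by case=> [[b Hb H]|[b Hb H]]; exists b => //; [left|right].
  + by case=> b [Hb|Hb] H; [left|right]; exists b.
- apply: regular_ext (regular_cat IH1 IH2) => w; rewrite /lang_cat; split.
  + case=> u [v [[b1 H1 Hu] [b2 H2 Hv] ->]].
    by exists (rmul b1 b2); [exists b1, b2|exists u, v].
  + by case=> b [b1 [b2 [H1 H2 ->]]] [u [v [Hu Hv ->]]]; exists u, v; split;
      [exists b1|exists b2|].
- apply: regular_ext (regular_star IH1) => w; rewrite /lang_star; split.
  + case=> ws [Hws ->]; elim: ws Hws => [|v ws IH] Hws.
      by exists (rone k) => //; exists [::].
    have [b Hb Hv] := Hws v (or_introl erefl).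
    have [c [ys [Hys ->]] Hc] := IH (fun v' Hv' => Hws v' (or_intror Hv')).
    exists (rmul b (foldr (@rmul k) (rone k) ys)); last by exists v, (foldr cat [::] ws).
    by exists (b :: ys); split => // y [<-|/Hys].
  + case=> b [ys [Hys ->]]; elim: ys w Hys => [|y ys IH] w Hys /=.
      by move=> ->; exists [::].
    case=> u [v [Hu Hv ->]].
    have [ws [Hws ->]] := IH v (fun y' Hy' => Hys y' (or_intror Hy')) Hv.
    exists (u :: ws); split => // v' [<-|/Hws //].
    by exists y => //; apply: Hys; left.
Qed.

Definition runion r : RL k := exist _ _ (regular_runion r).

Lemma is_sup_union (A : RL k -> Prop) s :
  (forall w, sval s w <-> exists2 a, A a & sval a w) -> is_sup eq (@radd k) A s.
Proof.
move=> Hs; split.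
- move=> a Ha; apply: RL_ext => w /=; rewrite /lang_union Hs.
  by split => [[H|//]|]; [exists a|right].
- move=> u Hu; apply: RL_ext => w /=; rewrite /lang_union Hs.
  by split => [[[a Ha H]|//]|]; [rewrite -(Hu a Ha); left|right].
Qed.

Lemma sval_sup (A : RL k -> Prop) s :
  regular_subset eq (@rmul k) (rone k) A -> is_sup eq (@radd k) A s ->
  forall w, sval s w <-> exists2 a, A a & sval a w.
Proof.
move=> [r Hr] [s_ub s_least] w.
have HU w' : sval (runion r) w' <-> exists2 a, A a & sval a w'.
  by split; case=> a Ha H; exists a => //; apply/Hr.
split => [Hw|[a Ha H]]; last by rewrite -(s_ub a Ha) /=; left.
apply/HU; rewrite -(s_least _ (proj1 (is_sup_union HU))) /=; by left.
Qed.

End RegularSups.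

(** * R-congruences *)

Notation rle rho := (dle rho (@radd _)).

Section Congruence.
Variables (k : nat) (rho : RL k -> RL k -> Prop).
Hypothesis rhoR : R_congruence rho.
Implicit Types x y z u : RL k.

Lemma cong_refl x : rho x x. Proof. by case: rhoR. Qed.
Lemma cong_sym x y : rho x y -> rho y x. Proof. by case: rhoR => _ H _ _ _; apply: H. Qed.
Lemma cong_trans x y z : rho x y -> rho y z -> rho x z.
Proof. by case: rhoR => _ _ H _ _; apply: H. Qed.
Lemma cong_eq x y : x = y -> rho x y. Proof. by move=> ->; apply: cong_refl. Qed.

Lemma cong_add x x' y y' : rho x x' -> rho y y' -> rho (radd x y) (radd x' y').
Proof. by case: rhoR => _ _ _ H _ Hx Hy; case: (H _ _ _ _ Hx Hy). Qed.
Lemma cong_mul x x' y y' : rho x x' -> rho y y' -> rho (rmul x y) (rmul x' y').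
Proof. by case: rhoR => _ _ _ H _ Hx Hy; case: (H _ _ _ _ Hx Hy). Qed.
Lemma cong_addl x y y' : rho y y' -> rho (radd x y) (radd x y').
Proof. by apply: cong_add; apply: cong_refl. Qed.
Lemma cong_addr x x' y : rho x x' -> rho (radd x y) (radd x' y).
Proof. by move/cong_add; apply; apply: cong_refl. Qed.
Lemma cong_mull x y y' : rho y y' -> rho (rmul x y) (rmul x y').
Proof. by apply: cong_mul; apply: cong_refl. Qed.
Lemma cong_mulr x x' y : rho x x' -> rho (rmul x y) (rmul x' y).
Proof. by move/cong_mul; apply; apply: cong_refl. Qed.

Lemma rle_refl x : rle rho x x. Proof. by rewrite /dle raddid; apply: cong_refl. Qed.

Lemma rle_trans x y z : rle rho x y -> rle rho y z -> rle rho x z.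
Proof.
move=> Hxy Hyz; apply: (@cong_trans _ (radd x (radd y z))).
  by apply: cong_addl; apply: cong_sym.
by rewrite raddA; apply: cong_trans Hyz; apply: cong_addr.
Qed.

Lemma rle_anti x y : rle rho x y -> rle rho y x -> rho x y.
Proof. by move=> Hxy Hyx; apply: cong_trans (cong_sym Hyx) _; rewrite raddC. Qed.

Lemma rle_add x y z : rle rho x z -> rle rho y z -> rle rho (radd x y) z.
Proof. by move=> Hx Hy; rewrite /dle -raddA; apply: cong_trans Hx; apply: cong_addl. Qed.

Lemma rle_incl x y : (forall w, sval x w -> sval y w) -> rle rho x y.
Proof.
move=> Hxy; apply: cong_eq; apply: RL_ext => w /=; rewrite /lang_union.
by split => [[/Hxy|]|]; [|  |right].
Qed.

Lemma rle0 x : rle rho (rzero k) x. Proof. exact: rle_incl. Qed.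

Lemma rle_congl x x' y : rho x x' -> rle rho x' y -> rle rho x y.
Proof. by move=> Hx; apply: cong_trans; apply: cong_addr. Qed.

Lemma rle_congr x y y' : rho y y' -> rle rho x y -> rle rho x y'.
Proof.
move=> Hy Hxy; apply: cong_trans (cong_trans _ Hxy) (Hy).
by apply: cong_addl; apply: cong_sym.
Qed.

Lemma rle_big (I : eqType) (r : seq I) (F : I -> RL k) u :
  (forall i, i \in r -> rle rho (F i) u) -> rle rho (\big[@radd k/rzero k]_(i <- r) F i) u.
Proof.
elim: r => [|i r IH] Hr; first by rewrite big_nil; apply: rle0.
rewrite big_cons; apply: rle_add; first by apply: Hr; rewrite mem_head.
by apply: IH => j Hj; apply: Hr; rewrite inE Hj orbT.
Qed.

Lemma rle_in_big (I : eqType) (r : seq I) (F : I -> RL k) i :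
  i \in r -> rle rho (F i) (\big[@radd k/rzero k]_(i <- r) F i).
Proof. by move=> Hi; apply: rle_incl => w Hw; apply/sval_big; exists i. Qed.

Lemma downclosure_cofinal (A B : RL k -> Prop) :
  (forall a, A a -> exists2 b, B b & rle rho a b) ->
  forall x, downclosure rho A x -> downclosure rho B x.
Proof.
move=> AB x [a [Ha Hxa]]; have [b Hb Hab] := AB a Ha.
by exists b; split => //; apply: rle_trans Hab.
Qed.

Notation rsemRL := (rsem (@eq (RL k)) (@rmul k) (rone k)).

(* The regular sets [r + u] and [u] have the same downward closure, so the
   sup axiom of [rho] equates their suprema [s + u] and [u]. *)
Lemma rle_runion (r : rexp (RL k)) s u :
  (forall w, sval s w <-> exists2 a, rsemRL r a & sval a w) ->
  (forall a, rsemRL r a -> rle rho a u) -> rle rho s u.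
Proof.
move=> Hs r_le_u; case: rhoR => _ _ _ _ rho_sup.
apply: (rho_sup (rsemRL (Rplus r (Ratom u))) (rsemRL (Ratom u))).
- by exists (Rplus r (Ratom u)).
- by exists (Ratom u).
- move=> x; split; apply: downclosure_cofinal => a /=.
  + by case=> [Ha|->]; exists u => //; [apply: r_le_u|apply: rle_refl].
  + by move=> ->; exists u; [right|apply: rle_refl].
- apply: is_sup_union => w /=; rewrite /lang_union Hs; split.
  + by case=> [[a Ha H]|H]; [exists a => //; left|exists u => //; right].
  + by case=> a [Ha|->] H; [left; exists a|right].
- by apply: is_sup_union => w /=; split => [H|[a -> //]]; exists u.
Qed.

Lemma rle_words x u : (forall w, sval x w -> rle rho (rword w) u) -> rle rho x u.
Proof.
move=> x_le_u; case: (proj2_sig x) => r Hr.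
have Hrmap := rsem_rmap (fun a b => esym (rword_cat a b)) (erefl (rone k)) r.
apply: (rle_runion (r := rmap (@rword k) r)).
- move=> w; split => [Hw|[_ /Hrmap [w' Hw' ->] /= ->]]; last exact/Hr.
  by exists (rword w) => //; apply/Hrmap; exists w => //; apply/Hr.
- by move=> _ /Hrmap [w Hw ->]; apply: x_le_u; apply/Hr.
Qed.

End Congruence.

Section LeastCongruence.
Variable k : nat.

Lemma rho_k_Rcong : R_congruence (@rho_k k).
Proof.
split.
- by move=> x rho rhoR _; apply: cong_refl.
- by move=> x y Hxy rho rhoR rhoB; apply: cong_sym (Hxy _ rhoR rhoB).
- by move=> x y z Hxy Hyz rho rhoR rhoB; apply: cong_trans (Hxy _ _ _) (Hyz _ _ _).
- move=> a a' b b' Ha Hb; split => rho rhoR rhoB.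
  + exact: cong_add (Ha _ _ _) (Hb _ _ _).
  + exact: cong_mul (Ha _ _ _) (Hb _ _ _).
- move=> A B HA HB AB s t Hs Ht rho rhoR rhoB.
  case: (rhoR) => _ _ _ _ rho_sup; apply: (rho_sup A B HA HB) => //.
  have dc_rho (A' B' : RL k -> Prop) :
      (forall x, downclosure (@rho_k k) A' x -> downclosure (@rho_k k) B' x) ->
      forall x, downclosure rho A' x -> downclosure rho B' x.
    move=> A'B'; apply: (downclosure_cofinal rhoR) => a Ha.
    have [|b [Hb ab]] := A'B' a.
      by exists a; split; rewrite // /dle raddid => rho' rho'R _; apply: cong_refl.
    by exists b => //; apply: ab.
  by move=> x; split; apply: dc_rho => y; rewrite AB.
Qed.

Lemma rho_k_braket : contains_braket (@rho_k k).
Proof. by split => [i j|] rho _ []. Qed.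

End LeastCongruence.

Section RegularFamilies.
Variables (k : nat) (rho : RL k -> RL k -> Prop).
Hypothesis rhoR : R_congruence rho.
Notation rsemRL E := (rsem E (@rmul k) (rone k)).

Lemma rsem_eq_cong r x : rsemRL eq r x -> rsemRL rho r x.
Proof.
elim: r x => [|a|r1 IH1 r2 IH2|r1 IH1 r2 IH2|r1 IH1] x //=.
- by move=> ->; apply: cong_refl.
- by case=> H; [left; apply: IH1|right; apply: IH2].
- by case=> y [z [Hy Hz ->]]; exists y, z; split; [apply: IH1|apply: IH2|apply: cong_refl].
- by case=> ys [Hys ->]; exists ys; split; [move=> y /Hys /IH1|apply: cong_refl].
Qed.

Lemma rsem_cong_eq r x : rsemRL rho r x -> exists2 x0, rsemRL eq r x0 & rho x x0.
Proof.
elim: r x => [|a|r1 IH1 r2 IH2|r1 IH1 r2 IH2|r1 IH1] x //=.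
- by move=> xa; exists a.
- by case=> [/IH1|/IH2] [x0 H1 H2]; exists x0 => //; [left|right].
- case=> y [z [/IH1 [y0 Hy0 Ey] /IH2 [z0 Hz0 Ez] Ex]].
  by exists (rmul y0 z0); [exists y0, z0|apply: cong_trans Ex (cong_mul rhoR Ey Ez)].
- case=> ys [Hys Ex].
  have [ys0 Hys0 E] : exists2 ys0, (forall y, List.In y ys0 -> rsemRL eq r1 y)
       & rho (foldr (@rmul k) (rone k) ys) (foldr (@rmul k) (rone k) ys0).
    elim: ys Hys {Ex} => [|y ys IH] Hys; first by exists [::] => //; apply: cong_refl.
    have [y0 Hy0 Ey] := IH1 _ (Hys y (or_introl erefl)).
    have [ys0 Hys0 E] := IH (fun y' H => Hys y' (or_intror H)).
    by exists (y0 :: ys0); [move=> y' [<-|/Hys0]|apply: cong_mul].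
  by exists (foldr (@rmul k) (rone k) ys0); [exists ys0|apply: cong_trans Ex E].
Qed.

End RegularFamilies.

(** * Normal forms modulo the bra-ket relations *)

Section BraKetWords.
Variables (k : nat) (rho : RL k -> RL k -> Prop).
Hypotheses (rhoR : R_congruence rho) (rhoB : contains_braket rho).

Definition qword (u : seq 'I_k) : seq (Delta k) := map inr u.
Definition pword (v : seq 'I_k) : seq (Delta k) := map inl v.

Lemma cong_cancel a b (i j : 'I_k) :
  rho (rword (a ++ [:: inl i; inr j] ++ b)) (if i == j then rword (a ++ b) else rzero k).
Proof.
have -> : rword (a ++ [:: inl i; inr j] ++ b) =
    rmul (rword a) (rmul (rmul (rp i) (rq j)) (rword b)).
  by rewrite !rword_cat.
apply: (cong_trans rhoR (y := rmul (rword a) (rmul (kdelta i j) (rword b)))).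
  by apply/(cong_mull rhoR)/(cong_mulr rhoR); case: rhoB.
rewrite /kdelta; case: (i == j); first by rewrite rmul1r rword_cat; apply: cong_refl.
by rewrite rmul0r rmulr0; apply: cong_refl.
Qed.

Lemma cong_cancel_word (l : seq 'I_k) a b :
  rho (rword (a ++ pword (rev l) ++ qword l ++ b)) (rword (a ++ b)).
Proof.
elim: l a b => [|x l IH] a b; first exact: cong_refl.
rewrite rev_cons /pword map_rcons -cats1 /=.
have := cong_cancel (a ++ pword (rev l)) (qword l ++ b) x x; rewrite eqxx.
by rewrite /pword -!catA => Hx; apply: (cong_trans rhoR _ (IH a b)).
Qed.

Lemma cong_cancel_mismatch c d1 d2 (x y : 'I_k) : x != y ->
  rho (rword (pword (rev (c ++ x :: d1)) ++ qword (c ++ y :: d2))) (rzero k).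
Proof.
move=> xy; have -> : pword (rev (c ++ x :: d1)) ++ qword (c ++ y :: d2) =
    (pword (rev d1) ++ [:: inl x]) ++ pword (rev c) ++ qword c ++ (inr y :: qword d2).
  by rewrite rev_cat rev_cons /pword /qword -cats1 !map_cat -!catA.
apply: (cong_trans rhoR (cong_cancel_word _ _ _)).
by have := cong_cancel (pword (rev d1)) (qword d2) x y; rewrite (negbTE xy) -catA.
Qed.

Lemma cong_expand a b :
  rho (rword (a ++ b)) (\big[@radd k/rzero k]_(i < k) rword (a ++ [:: inr i; inl i] ++ b)).
Proof.
have -> : rword (a ++ b) = rmul (rword a) (rmul (rone k) (rword b)).
  by rewrite rmul1r rword_cat.
apply: (cong_trans rhoR (y := rmul (rword a) (rmul (sum_qp k) (rword b)))).
  by apply/(cong_mull rhoR)/(cong_mulr rhoR)/(cong_sym rhoR); case: rhoB.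
rewrite /sum_qp big_distrl big_distrr; apply: (cong_eq rhoR); apply: eq_bigr => i _ /=.
by rewrite !rword_cat.
Qed.

Lemma cong_expand_qp u v :
  rho (rword (qword u ++ pword v))
      (\big[@radd k/rzero k]_(i < k) rword (qword (rcons u i) ++ pword (i :: v))).
Proof.
apply: (cong_trans rhoR (cong_expand _ _)); apply: (cong_eq rhoR); apply: eq_bigr => i _.
by rewrite /qword /pword map_rcons -cats1 -catA.
Qed.

Lemma rle_extend u v s :
  rle rho (rword (qword (u ++ s) ++ pword (rev s ++ v))) (rword (qword u ++ pword v)).
Proof.
elim/last_ind: s => [|s i IH]; first by rewrite cats0; apply: rle_refl.
apply: (rle_trans rhoR _ IH); apply: (rle_congr rhoR (cong_sym rhoR (cong_expand_qp _ _))).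
rewrite rev_rcons -rcons_cat.
exact: (rle_in_big rhoR (fun i => rword (qword (rcons (u ++ s) i) ++ pword (i :: rev s ++ v)))
          (mem_index_enum i)).
Qed.

Definition nf_step (st : option (seq 'I_k * seq 'I_k)) (x : Delta k) :=
  if st is Some (u, vr) then
    match x, vr with
    | inl i, _ => Some (u, i :: vr)
    | inr i, [::] => Some (rcons u i, [::])
    | inr i, j :: vr' => if j == i then Some (u, vr') else None
    end
  else None.

Definition nf_val (st : option (seq 'I_k * seq 'I_k)) : RL k :=
  if st is Some (u, vr) then rword (qword u ++ pword (rev vr)) else rzero k.

Definition nf (w : seq (Delta k)) := foldl nf_step (Some ([::], [::])) w.

Lemma cong_nf_step st x : rho (rmul (nf_val st) (rword [:: x])) (nf_val (nf_step st x)).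
Proof.
case: st => [[u vr]|] /=; last by rewrite rmul0r; apply: cong_refl.
rewrite rword_cat; case: x => i /=.
  by rewrite rev_cons /pword map_rcons -cats1 catA; apply: cong_refl.
case: vr => [|j vr] /=.
  by rewrite /qword map_rcons -cats1 !cats0; apply: cong_refl.
rewrite rev_cons /pword map_rcons -cats1 -!catA.
have := cong_cancel (qword u ++ map inl (rev vr)) [::] j i.
by rewrite !cats0 -!catA; case: (j == i).
Qed.

Lemma cong_nf w : rho (rword w) (nf_val (nf w)).
Proof.
elim/last_ind: w => [|w x IH]; first exact: cong_refl.
rewrite /nf foldl_rcons -/(nf w) -cats1 -rword_cat.
exact: (cong_trans rhoR (cong_mulr rhoR _ IH) (cong_nf_step _ _)).
Qed.

End BraKetWords.

(** * Word substitutions *)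

Section WordSubstitution.
Variables (k n : nat) (f : Delta k -> seq (Delta n)).

Definition wsubst (w : seq (Delta k)) : seq (Delta n) := flatten (map f w).

Lemma wsubst_cat a b : wsubst (a ++ b) = wsubst a ++ wsubst b.
Proof. by rewrite /wsubst map_cat flatten_cat. Qed.

Definition lang_subst (L : lang k) : lang n := fun w' => exists2 w, L w & w' = wsubst w.

Lemma regular_subst (L : lang k) : regular_lang L -> regular_lang (lang_subst L).
Proof.
move=> [r Hr]; exists (rmap wsubst r) => w'.
rewrite (rsem_rmap (mul1 := cat) (one1 := [::]) wsubst_cat) //.
by split; case=> w Hw ->; exists w => //; apply/Hr.
Qed.

Definition rsubst (x : RL k) : RL n := exist _ _ (regular_subst (proj2_sig x)).

Lemma rsubst_add x y : rsubst (radd x y) = radd (rsubst x) (rsubst y).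
Proof.
apply: RL_ext => w /=; rewrite /lang_subst /lang_union; split.
- by case=> v [H|H] ->; [left|right]; exists v.
- by case=> [[v H ->]|[v H ->]]; exists v => //; [left|right].
Qed.

Lemma rsubst_mul x y : rsubst (rmul x y) = rmul (rsubst x) (rsubst y).
Proof.
apply: RL_ext => w /=; rewrite /lang_subst /lang_cat; split.
- case=> v [a [b [Ha Hb ->]]] ->; exists (wsubst a), (wsubst b); rewrite wsubst_cat.
  by split => //; [exists a|exists b].
- case=> a' [b' [[a Ha ->] [b Hb ->] ->]]; exists (a ++ b); rewrite ?wsubst_cat //.
  by exists a, b.
Qed.

Lemma rsubst0 : rsubst (rzero k) = rzero n.
Proof. by apply: RL_ext => w /=; split => // [[v []]]. Qed.

Lemma rsubst_word w : rsubst (rword w) = rword (wsubst w).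
Proof.
apply: RL_ext => w' /=; rewrite /lang_subst /lang_word.
by split => [[v -> ->] //|->]; exists w.
Qed.

Lemma rsubst1 : rsubst (rone k) = rone n.
Proof. exact: rsubst_word [::]. Qed.

Lemma rsubst_big (I : Type) (r : seq I) (F : I -> RL k) :
  rsubst (\big[@radd k/rzero k]_(i <- r) F i) = \big[@radd n/rzero n]_(i <- r) rsubst (F i).
Proof.
elim: r => [|i r IH]; first by rewrite !big_nil rsubst0.
by rewrite !big_cons rsubst_add IH.
Qed.

Lemma rsubst_incl x y : (forall w, sval x w -> sval y w) ->
  forall w, sval (rsubst x) w -> sval (rsubst y) w.
Proof. by move=> xy w [v /xy Hv ->]; exists v. Qed.

End WordSubstitution.

Section SubstitutionMorphism.
Variables (k n : nat) (f : Delta k -> seq (Delta n)).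
Notation rsemRL := (rsem (@eq (RL k)) (@rmul k) (rone k)).
Notation pullback rho := (fun x y => rho (rsubst f x) (rsubst f y)).

Lemma rle_subst_runion (rho : RL n -> RL n -> Prop) (r : rexp (RL k)) s u :
  R_congruence rho ->
  (forall w, sval s w <-> exists2 a, rsemRL r a & sval a w) ->
  (forall a, rsemRL r a -> rle rho (rsubst f a) u) -> rle rho (rsubst f s) u.
Proof.
move=> rhoR Hs r_le_u.
have Hrmap := rsem_rmap (@rsubst_mul _ _ f) (rsubst1 f) r.
apply: (rle_runion rhoR (r := rmap (rsubst f) r)) => [w|_ /Hrmap [a /r_le_u Ha ->] //].
split => [[v /Hs [a Ha Hv] ->]|[_ /Hrmap [a Ha ->] [v Hv ->]]].
  by exists (rsubst f a); [apply/Hrmap; exists a|exists v].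
by exists v => //; apply/Hs; exists a.
Qed.

Lemma rle_subst_sup (rho : RL n -> RL n -> Prop) (A B : RL k -> Prop) s t :
  R_congruence rho ->
  regular_subset eq (@rmul k) (rone k) A -> regular_subset eq (@rmul k) (rone k) B ->
  is_sup eq (@radd k) A s -> is_sup eq (@radd k) B t ->
  (forall x, downclosure (pullback rho) A x -> downclosure (pullback rho) B x) ->
  rle rho (rsubst f s) (rsubst f t).
Proof.
move=> rhoR regA regB supA supB AB; have [r Hr] := regA.
apply: (rle_subst_runion (r := r) rhoR) => [w|a /Hr Ha].
  by rewrite (sval_sup regA supA); split; case=> a Ha H; exists a => //; apply/Hr.
have [b [Hb]] : downclosure (pullback rho) B a.
  by apply: AB; exists a; split => //; rewrite raddid; apply: cong_refl.
rewrite rsubst_add => ab; apply: (rle_trans rhoR ab); apply: (rle_incl rhoR).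
by apply: rsubst_incl => v Hv; apply/(sval_sup regB supB); exists b.
Qed.

Lemma R_congruence_pullback (rho : RL n -> RL n -> Prop) :
  R_congruence rho -> R_congruence (pullback rho).
Proof.
move=> rhoR; split.
- by move=> x; apply: cong_refl.
- by move=> x y; apply: cong_sym.
- by move=> x y z; apply: cong_trans.
- move=> a a' b b' Ha Hb; rewrite !rsubst_add !rsubst_mul.
  by split; [apply: cong_add|apply: cong_mul].
- move=> A B regA regB AB s t supA supB; apply: (rle_anti rhoR).
  + by apply: rle_subst_sup supA supB _ => // x /AB.
  + by apply: rle_subst_sup supB supA _ => // x /AB.
Qed.

Hypothesis f_braket : contains_braket (pullback (@rho_k n)).

Lemma rsubst_rho_k x y : rho_k x y -> rho_k (rsubst f x) (rsubst f y).
Proof. by move=> xy; apply: xy (R_congruence_pullback (@rho_k_Rcong n)) f_braket. Qed.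

Lemma rsubst_R_morphism : R_morphism (rsubst f).
Proof.
have rhoR := @rho_k_Rcong n; have rhoRk := @rho_k_Rcong k.
split; first exact: rsubst_rho_k.
split; rewrite ?rsubst0 ?rsubst1;
  try by move=> *; rewrite ?rsubst_add ?rsubst_mul; apply: cong_refl.
move=> A [r Hr] s [s_ub s_least].
have s_runion : rho_k s (runion r).
  apply: (rle_anti rhoRk).
  + apply: s_least => a /Hr /(rsem_cong_eq rhoRk) [a0 Ha0 E].
    by apply: (rle_congl rhoRk E); apply: (rle_incl rhoRk) => w Hw; exists a0.
  + apply: (rle_runion rhoRk (r := r)) => // a0 Ha0.
    by apply: s_ub; apply/Hr; apply: rsem_eq_cong.
split.
- move=> y [x Hx yx]; apply: (rle_congl rhoR yx).
  by have := rsubst_rho_k (s_ub x Hx); rewrite rsubst_add.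
- move=> u u_ub; apply: (rle_congl rhoR (rsubst_rho_k s_runion)).
  apply: (rle_subst_runion (r := r) rhoR) => // a0 Ha0.
  apply: u_ub; exists a0; last exact: cong_refl.
  by apply/Hr; apply: rsem_eq_cong.
Qed.

End SubstitutionMorphism.

(** * The embedding of C_m into C_2 *)

Definition b0 : 'I_2 := ord0.
Definition b1 : 'I_2 := ord_max.

Lemma cong_one_telescope (rho : RL 2 -> RL 2 -> Prop) t :
  R_congruence rho -> contains_braket rho ->
  rho (rone 2) (radd (\big[@radd 2/rzero 2]_(i < t)
                        rword (qword (rcons (nseq i b1) b0) ++ pword (b0 :: nseq i b1)))
                     (rword (qword (nseq t b1) ++ pword (nseq t b1)))).
Proof.
move=> rhoR rhoB; elim: t => [|t IH]; first by rewrite big_ord0 radd0r; apply: cong_refl.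
apply: (cong_trans rhoR IH); rewrite big_ord_recr /= -raddA; apply: (cong_addl rhoR).
apply: (cong_trans rhoR (cong_expand_qp rhoR rhoB _ _)).
rewrite !big_ord_recr /= big_ord0 radd0r.
have -> : widen_ord (leqnSn 1) ord_max = b0 by apply: val_inj.
have -> : rcons (nseq t b1) b1 = nseq t.+1 b1 by rewrite -cats1 -[t.+1]addn1 nseqD.
exact: cong_refl.
Qed.

Section Encoding.
Variable m : nat.

Definition code (i : 'I_m) : seq 'I_2 :=
  if i < m.-1 then rcons (nseq i b1) b0 else nseq i b1.

Definition encode (x : Delta m) : seq (Delta 2) :=
  match x with inl i => pword (rev (code i)) | inr i => qword (code i) end.

Definition embed : RL m -> RL 2 := rsubst encode.

Lemma embed_word w : embed (rword w) = rword (wsubst encode w).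
Proof. exact: rsubst_word. Qed.

Lemma code_lt (i j : 'I_m) : i < j ->
  code i = nseq i b1 ++ [:: b0] /\ exists d, code j = nseq i b1 ++ b1 :: d.
Proof.
move=> ij; have i_lt : i < m.-1 by have := ltn_ord j; lia.
split; first by rewrite /code i_lt cats1.
have nseq_j : nseq j b1 = nseq i b1 ++ b1 :: nseq (j - i.+1) b1.
  by rewrite -[b1 :: _]/(nseq (j - i.+1).+1 b1) -nseqD; congr nseq; lia.
rewrite /code; case: (j < m.-1); last by exists (nseq (j - i.+1) b1).
by rewrite nseq_j rcons_cat; eexists.
Qed.

Section EncodingBraKet.
Variable rho : RL 2 -> RL 2 -> Prop.
Hypotheses (rhoR : R_congruence rho) (rhoB : contains_braket rho).

Lemma cong_embed_braket (i j : 'I_m) :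
  rho (rmul (embed (rp i)) (embed (rq j))) (if i == j then rone 2 else rzero 2).
Proof.
rewrite !embed_word rword_cat /wsubst /= !cats0.
case: (eqVneq i j) => [<-|ij].
  by have := cong_cancel_word rhoR rhoB (code i) [::] [::]; rewrite cats0.
case: (ltngtP i j) => [lt_ij|lt_ji|/val_inj eq_ij]; last by rewrite eq_ij eqxx in ij.
- by have [-> [d ->]] := code_lt lt_ij; apply: cong_cancel_mismatch.
- by have [-> [d ->]] := code_lt lt_ji; apply: cong_cancel_mismatch.
Qed.

End EncodingBraKet.
End Encoding.

Lemma cong_embed_sum m (rho : RL 2 -> RL 2 -> Prop) :
  R_congruence rho -> contains_braket rho -> 0 < m -> rho (embed (sum_qp m)) (rone 2).
Proof.
move=> rhoR rhoB; case: m => // m _.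
rewrite /embed /sum_qp rsubst_big.
under eq_bigr => i _ do rewrite rsubst_mul !rsubst_word rword_cat /wsubst /= !cats0.
rewrite big_ord_recr /=; apply: (cong_sym rhoR).
apply: (cong_trans rhoR (cong_one_telescope m rhoR rhoB)); apply: (cong_eq rhoR).
congr radd; last by rewrite /code /= ltnn rev_nseq.
by apply: eq_bigr => i _; rewrite /code /= ltn_ord rev_rcons rev_nseq.
Qed.

Lemma embed_braket m : 0 < m -> contains_braket (fun x y : RL m => rho_k (embed x) (embed y)).
Proof.
move=> m_gt0; split.
  move=> i j; rewrite /embed rsubst_mul /kdelta.
  have := cong_embed_braket (@rho_k_Rcong 2) (@rho_k_braket 2) i j.
  by case: (i == j); rewrite ?rsubst1 ?rsubst0.
rewrite /embed rsubst1; exact: cong_embed_sum (@rho_k_Rcong 2) (@rho_k_braket 2) m_gt0.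
Qed.

(** * The stack representation of C_k *)

Section Streams.
Variable T : Type.
Implicit Types (l : seq T) (z : nat -> T).

Definition prepend l z : nat -> T := fun n => nth (z (n - size l)) l n.

Lemma prepend_nil z : prepend [::] z = z.
Proof. by apply: functional_extensionality => n; rewrite /prepend /= subn0 nth_nil. Qed.

Lemma prepend_cat l1 l2 z : prepend (l1 ++ l2) z = prepend l1 (prepend l2 z).
Proof.
apply: functional_extensionality => n; rewrite /prepend nth_cat size_cat.
case: ltnP => [n_lt|n_ge]; first exact: set_nth_default.
by rewrite [RHS]nth_default // subnDA.
Qed.

Lemma prepend_injr l z1 z2 : prepend l z1 = prepend l z2 -> z1 = z2.
Proof.
move=> E; apply: functional_extensionality => n.
have := congr1 (fun z => z (n + size l)) E.
by rewrite /prepend !nth_default ?leq_addl // addnK.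
Qed.

Lemma prepend_inj l1 l2 z1 z2 : size l1 = size l2 ->
  prepend l1 z1 = prepend l2 z2 -> l1 = l2 /\ z1 = z2.
Proof.
move=> size12 E; suff l12 : l1 = l2 by split => //; subst l2; apply: prepend_injr E.
apply: (@eq_from_nth _ (z1 0)) => // i i_lt.
have := congr1 (fun z => z i) E; rewrite /prepend (set_nth_default (z1 0)) //.
by rewrite (set_nth_default (z1 0)) // -size12.
Qed.

Lemma prepend1_inj x y z1 z2 : prepend [:: x] z1 = prepend [:: y] z2 -> x = y /\ z1 = z2.
Proof. by case/(prepend_inj (l1 := [:: x]) (l2 := [:: y]) erefl) => -[]. Qed.

End Streams.

Section StackRepresentation.
Variable k : nat.

(* A state is a stream of letters together with its height (in Z, so that
   [sum_qp] acts as the identity at every height): [p_i] pushes [i], [q_i] pops [i].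
   The height rules out coincidences between different finite prefixes of
   periodic streams. *)
Definition stack := ((nat -> 'I_k) * Z)%type.

Definition letter_rel (x : Delta k) (s t : stack) : Prop :=
  match x with
  | inl i => t = (prepend [:: i] s.1, (s.2 + 1)%Z)
  | inr i => s = (prepend [:: i] t.1, (t.2 + 1)%Z)
  end.

Fixpoint word_rel (w : seq (Delta k)) (s t : stack) : Prop :=
  if w is x :: w' then exists r, letter_rel x s r /\ word_rel w' r t else s = t.

Definition lang_rel (L : lang k) (s t : stack) := exists2 w, L w & word_rel w s t.

Definition rel_equiv (x y : RL k) :=
  forall s t, lang_rel (sval x) s t <-> lang_rel (sval y) s t.

Lemma word_rel_cat a b s t :
  word_rel (a ++ b) s t <-> exists r, word_rel a s r /\ word_rel b r t.
Proof.
elim: a s => [|x a IH] s /=; first by split; [exists s|case=> r [-> H]].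
split.
- by case=> r [Hx /IH [r' [H1 H2]]]; exists r'; split => //; exists r.
- by case=> r' [[r [Hx H1]] H2]; exists r; split => //; apply/IH; exists r'.
Qed.

Lemma word_rel_qword l s t :
  word_rel (qword l) s t <-> s = (prepend l t.1, (t.2 + Z.of_nat (size l))%Z).
Proof.
elim: l s => [|i l IH] s /=; first by rewrite prepend_nil Z.add_0_r; case: t.
split.
- by case=> r [-> /IH ->]; rewrite /= -prepend_cat; congr pair; lia.
- move=> ->; exists (prepend l t.1, (t.2 + Z.of_nat (size l))%Z).
  by split; [rewrite /= -prepend_cat; congr pair; lia|apply/IH].
Qed.

Lemma word_rel_pword l s t :
  word_rel (pword l) s t <-> t = (prepend (rev l) s.1, (s.2 + Z.of_nat (size l))%Z).
Proof.
elim: l s t => [|i l IH] s t /=.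
  by rewrite prepend_nil Z.add_0_r; case: s; split => // ->.
split.
- by case=> r [-> /IH ->]; rewrite /= rev_cons -cats1 prepend_cat; congr pair; lia.
- move=> ->; exists (prepend [:: i] s.1, (s.2 + 1)%Z); split => //; apply/IH.
  by rewrite /= rev_cons -cats1 prepend_cat; congr pair; lia.
Qed.

Lemma lang_rel_word w s t : lang_rel (sval (rword w)) s t <-> word_rel w s t.
Proof. by split=> [[w' -> //]|]; exists w. Qed.

Lemma lang_rel_add x y s t :
  lang_rel (sval (radd x y)) s t <-> lang_rel (sval x) s t \/ lang_rel (sval y) s t.
Proof.
split; first by case=> w [H|H] Hw; [left|right]; exists w.
by case=> [[w H Hw]|[w H Hw]]; exists w => //; [left|right].
Qed.

Lemma lang_rel_mul x y s t :
  lang_rel (sval (rmul x y)) s t <-> exists r, lang_rel (sval x) s r /\ lang_rel (sval y) r t.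
Proof.
split.
- case=> w [a [b [Ha Hb ->]]] /word_rel_cat [r [H1 H2]].
  by exists r; split; [exists a|exists b].
- case=> r [[a Ha H1] [b Hb H2]]; exists (a ++ b); first by exists a, b.
  by apply/word_rel_cat; exists r.
Qed.

Lemma rel_equiv_sup (A B : RL k -> Prop) s t :
  regular_subset eq (@rmul k) (rone k) A -> regular_subset eq (@rmul k) (rone k) B ->
  is_sup eq (@radd k) A s -> is_sup eq (@radd k) B t ->
  (forall x, downclosure rel_equiv A x -> downclosure rel_equiv B x) ->
  forall p q, lang_rel (sval s) p q -> lang_rel (sval t) p q.
Proof.
move=> regA regB supA supB AB p q [w /(sval_sup regA supA) [a Ha Haw] Hw].
have [b [Hb ab]] : downclosure rel_equiv B a.
  by apply: AB; exists a; split => //; rewrite raddid.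
have /ab [w' Hw' Hw'pq] : lang_rel (sval (radd a b)) p q by apply/lang_rel_add; left; exists w.
by exists w' => //; apply/(sval_sup regB supB); exists b.
Qed.

Lemma rel_equiv_Rcong : R_congruence rel_equiv.
Proof.
split.
- by [].
- by move=> x y xy s t; rewrite xy.
- by move=> x y z xy yz s t; rewrite xy yz.
- move=> a a' b b' aa' bb'; split => s t; first by rewrite !lang_rel_add aa' bb'.
  rewrite !lang_rel_mul.
  by split; case=> r [H1 H2]; exists r; split; rewrite ?aa' ?bb' // -?aa' -?bb'.
- move=> A B regA regB AB s t supA supB p q.
  split; first by apply: (rel_equiv_sup regA regB supA supB) => x /AB.
  by apply: (rel_equiv_sup regB regA supB supA) => x /AB.
Qed.

Lemma stack_pop (s : stack) : s = (prepend [:: s.1 0] (fun n => s.1 n.+1), ((s.2 - 1) + 1)%Z).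
Proof.
case: s => z h /=; congr pair; last lia.
by apply: functional_extensionality => -[|n] //; rewrite /prepend nth_default //= subn1.
Qed.

Lemma rel_equiv_braket : contains_braket rel_equiv.
Proof.
split.
- move=> i j s t; rewrite rword_cat lang_rel_word /kdelta.
  case: (eqVneq i j) => [<-|ij] /=.
  + split => [[r [-> [r' [E <-]]]]|/lang_rel_word ->].
      case: E => E1 E2; have [_ {}E1] := prepend1_inj E1; apply/lang_rel_word.
      by case: s r' E1 E2 => z h [z' h'] /= -> E2; congr pair; lia.
    by exists (prepend [:: i] t.1, (t.2 + 1)%Z); split => //; exists t.
  + split => [[r [-> [r' [[E _] _]]]]|[]] //.
    by have [ij' _] := prepend1_inj E; rewrite ij' eqxx in ij.
- move=> s t; split.
  + case=> w /sval_big [i _]; rewrite rword_cat => /= -> [r [-> [r' [-> ->]]]].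
    exact/lang_rel_word.
  + move=> /lang_rel_word ->; exists [:: inr (t.1 0); inl (t.1 0)].
      by apply/sval_big; exists (t.1 0); rewrite ?mem_index_enum // rword_cat.
    exists (fun n => t.1 n.+1, (t.2 - 1)%Z); split; first exact: stack_pop.
    by exists t; split => //; apply: stack_pop.
Qed.

Lemma rho_k_rel_equiv x y : rho_k x y -> rel_equiv x y.
Proof. by apply; [exact: rel_equiv_Rcong|exact: rel_equiv_braket]. Qed.

End StackRepresentation.

(** * Injectivity *)

Section PrefixCode.
Variable m : nat.

Definition codes (u : seq 'I_m) : seq 'I_2 := flatten (map (@code m) u).

Lemma codes_cat a b : codes (a ++ b) = codes a ++ codes b.
Proof. by rewrite /codes map_cat flatten_cat. Qed.

Lemma prepend_code_inj (i j : 'I_m) z1 z2 :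
  prepend (code i) z1 = prepend (code j) z2 -> i = j /\ z1 = z2.
Proof.
have code_neq (i' j' : 'I_m) z1' z2' :
    i' < j' -> prepend (code i') z1' <> prepend (code j') z2'.
  move=> ij /(congr1 (fun z => z (nat_of_ord i'))).
  have [-> [d ->]] := code_lt ij.
  by rewrite /prepend !nth_cat size_nseq ltnn subnn.
move=> E; have ij : i = j.
  by case: (ltngtP i j) => [/code_neq/(_ E)|/code_neq/(_ (esym E))|/val_inj].
by subst j; split => //; apply: prepend_injr E.
Qed.

Lemma prepend_codes_cases a b z1 z2 : prepend (codes a) z1 = prepend (codes b) z2 ->
  (exists2 s, a = b ++ s & z2 = prepend (codes s) z1) \/
  (exists2 s, b = a ++ s & z1 = prepend (codes s) z2).
Proof.
elim: a b => [|i a IH] b.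
  by rewrite prepend_nil => E; right; exists b.
case: b => [|j b].
  by rewrite [codes [::]]/= prepend_nil => E; left; exists (i :: a).
rewrite /= !prepend_cat => /prepend_code_inj [<- /IH].
by case=> [[s -> ->]|[s -> ->]]; [left|right]; exists s.
Qed.

Lemma prepend_codes_inj a b z1 z2 : size a = size b ->
  prepend (codes a) z1 = prepend (codes b) z2 -> a = b.
Proof.
move=> size_ab /prepend_codes_cases [[s ab _]|[s ba _]]; subst;
  by rewrite (@size0nil _ s) ?cats0 //; move: size_ab; rewrite size_cat; lia.
Qed.

Hypothesis m_gt1 : 1 < m.

Lemma code_nonempty (i : 'I_m) : 0 < size (code i).
Proof.
rewrite /code; case: ifP => [_|]; first by rewrite size_rcons.
by rewrite size_nseq; have := ltn_ord i; lia.
Qed.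

Lemma codes_inj a b : codes a = codes b -> a = b.
Proof.
have codes_nil s : size (codes s) = 0 -> s = [::].
  by case: s => // i s; rewrite /codes /= size_cat; have := code_nonempty i; lia.
move=> E; have := congr1 (fun l => prepend l (fun=> b0)) E.
case/prepend_codes_cases => [[s ab _]|[s ba _]]; subst;
  move/(congr1 size): E; rewrite codes_cat size_cat => E;
  by rewrite (codes_nil s) ?cats0 //; lia.
Qed.

Fixpoint code_stream_fuel (fuel : nat) (t : nat -> 'I_m) (n : nat) : 'I_2 :=
  if fuel is fuel'.+1 then
    nth (code_stream_fuel fuel' (fun i => t i.+1) (n - size (code (t 0)))) (code (t 0)) n
  else b0.

(* The concatenation [code (t 0) ++ code (t 1) ++ ...]; position [n] is reached
   after at most [n + 1] codewords since codewords are nonempty. *)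
Definition code_stream t n := code_stream_fuel n.+1 t n.

Lemma code_stream_fuel_enough f1 f2 t n : n < f1 -> n < f2 ->
  code_stream_fuel f1 t n = code_stream_fuel f2 t n.
Proof.
elim: f1 f2 t n => [|f1 IH] [|f2] t n //= n_lt1 n_lt2.
case: (ltnP n (size (code (t 0)))) => [n_lt|n_ge]; first exact: set_nth_default.
rewrite !nth_default //; apply: IH; have := code_nonempty (t 0); lia.
Qed.

Lemma code_stream_cons t :
  code_stream t = prepend (code (t 0)) (code_stream (fun i => t i.+1)).
Proof.
apply: functional_extensionality => n.
rewrite /code_stream /prepend [code_stream_fuel n.+1 _ _]/=.
case: (ltnP n (size (code (t 0)))) => [n_lt|n_ge]; first exact: set_nth_default.
rewrite !nth_default //; apply: code_stream_fuel_enough; have := code_nonempty (t 0); lia.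
Qed.

Lemma code_stream_prefix t n :
  code_stream t = prepend (codes (mkseq t n)) (code_stream (fun i => t (i + n))).
Proof.
elim: n t => [|n IH] t.
  rewrite prepend_nil; congr code_stream.
  by apply: functional_extensionality => i; rewrite addn0.
rewrite code_stream_cons IH /mkseq /= -[iota 1 n]/(iota (1 + 0) n) iotaDl -map_comp.
rewrite prepend_cat; congr (prepend _ (prepend _ (code_stream _))).
by apply: functional_extensionality => i; rewrite addnS.
Qed.

End PrefixCode.

Lemma rcons_chain (T : Type) (P : seq T -> Prop) : inhabited T -> P [::] ->
  (forall s, P s -> exists x, P (rcons s x)) -> exists t : nat -> T, forall n, P (mkseq t n).
Proof.
move=> inhT P0 P_ext.
pose next (s : seq T) := epsilon inhT (fun x => P (rcons s x)).
pose pre n := ssrnat.iter n (fun s => rcons s (next s)) [::].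
have P_pre n : P (pre n).
  elim: n => [|n IH] //; exact: epsilon_spec inhT _ (P_ext _ IH).
exists (fun n => next (pre n)) => n; suff -> : mkseq (fun n => next (pre n)) n = pre n by [].
by elim: n => [|n IH] //; rewrite mkseqS IH.
Qed.

Section Faithfulness.
Variable m : nat.
Hypothesis m_gt1 : 1 < m.
Let m_gt0 : 0 < m. Proof. exact: ltnW. Qed.

Lemma wsubst_encode_qp (u v : seq 'I_m) : wsubst (@encode m) (qword u ++ pword v) =
  qword (codes u) ++ pword (flatten (map (fun i => rev (code i)) v)).
Proof. by rewrite wsubst_cat /wsubst /qword /pword /codes !map_flatten -!map_comp. Qed.

Lemma rev_flatten_rev_code (v : seq 'I_m) :
  rev (flatten (map (fun i => rev (code i)) v)) = codes (rev v).
Proof.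
elim: v => [|i v IH] //=; rewrite rev_cat IH revK rev_cons -cats1 codes_cat.
by rewrite /codes /= cats0.
Qed.

Lemma word_rel_encode_qp (u v : seq 'I_m) s t :
  word_rel (wsubst (@encode m) (qword u ++ pword v)) s t <->
  exists r : stack 2, s = (prepend (codes u) r.1, (r.2 + Z.of_nat (size (codes u)))%Z) /\
                      t = (prepend (codes (rev v)) r.1, (r.2 + Z.of_nat (size (codes (rev v))))%Z).
Proof.
have size_v : size (flatten (map (fun i => rev (code i)) v)) = size (codes (rev v)).
  by rewrite -rev_flatten_rev_code size_rev.
rewrite wsubst_encode_qp word_rel_cat; split.
- case=> r [/word_rel_qword -> /word_rel_pword ->]; exists r; split => //.
  by rewrite rev_flatten_rev_code size_v.
- case=> r [-> ->]; exists r; split; first exact/word_rel_qword.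
  by apply/word_rel_pword; rewrite rev_flatten_rev_code size_v.
Qed.

Lemma encode_qp_rel_cases (u v u' v' : seq 'I_m) z :
  word_rel (wsubst (@encode m) (qword u' ++ pword v'))
    (prepend (codes u) z, Z.of_nat (size (codes u)))
    (prepend (codes (rev v)) z, Z.of_nat (size (codes (rev v)))) ->
  (exists2 s, u = u' ++ s & v = rev s ++ v') \/
  (exists s z', [/\ u' = u ++ s, v' = rev s ++ v & z = prepend (codes s) z']).
Proof.
case/word_rel_encode_qp => -[r h] /= [[Eu hu] [Ev hv]].
have rev_eq (a b : seq 'I_m) : codes (rev a) = codes (rev b) -> a = b.
  by move=> E; rewrite -[a]revK (codes_inj m_gt1 E) revK.
case: (prepend_codes_cases Eu) => [[s us rz]|[s u's zr]].
- left; exists s => //; apply: rev_eq; rewrite rev_cat revK.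
  move: Ev; rewrite rz -prepend_cat -codes_cat.
  move: hu hv; rewrite us codes_cat size_cat => hu hv.
  by case/prepend_inj => [|-> //]; rewrite codes_cat size_cat; lia.
- right; exists s, r; split => //; apply: rev_eq; rewrite rev_cat revK.
  move: Ev; rewrite zr -prepend_cat -codes_cat => /esym.
  move: hu hv; rewrite u's codes_cat size_cat => hu hv.
  by case/prepend_inj => [|<- //]; rewrite codes_cat size_cat; lia.
Qed.

Lemma lang_rel_embed (x : RL m) s t :
  lang_rel (sval (embed x)) s t <-> exists2 w, sval x w & word_rel (wsubst (@encode m) w) s t.
Proof.
split; first by case=> _ [w Hw ->] H; exists w.
by case=> w Hw H; exists (wsubst (@encode m) w) => //; exists w.
Qed.

Lemma rel_equiv_embed_nf (w : seq (Delta m)) :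
  rel_equiv (embed (rword w)) (embed (nf_val (nf w))).
Proof.
apply: rho_k_rel_equiv (rsubst_rho_k (embed_braket m_gt0) _).
exact: cong_nf (@rho_k_Rcong m) (@rho_k_braket m) w.
Qed.

Section AnyCongruence.
Variable rho : RL m -> RL m -> Prop.
Hypotheses (rhoR : R_congruence rho) (rhoB : contains_braket rho).

(* If [q_u p_v] is not below [y], neither is one of its expansions
   [q_(u i) p_(i v)], and so on: dependent choice gives an infinite branch [t] of
   expansions not below [y].  The states built from the stream coding [t] are
   related by the image of a normal form [q_u' p_v'] of some word of [y]; by the
   prefix property, either [q_u' p_v'] is a stage of the branch or [q_u p_v] is
   an expansion of [q_u' p_v'], and both contradict the choice of the branch. *)
Lemma rle_qp_of_embed_rel (u v : seq 'I_m) (y : RL m) :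
  (forall s t, word_rel (wsubst (@encode m) (qword u ++ pword v)) s t ->
               lang_rel (sval (embed y)) s t) ->
  rle rho (rword (qword u ++ pword v)) y.
Proof.
move=> rel_uv_y; apply: NNPP => not_le.
pose bad s := ~ rle rho (rword (qword (u ++ s) ++ pword (rev s ++ v))) y.
have [t bad_t] : exists t, forall n, bad (mkseq t n).
  apply: rcons_chain; [exact: inhabits (Ordinal m_gt0)|by rewrite /bad cats0|].
  move=> s bad_s; apply: NNPP => none_bad; apply: bad_s.
  apply: (rle_congl rhoR (cong_expand_qp rhoR rhoB _ _)); apply: (rle_big rhoR) => i _.
  apply: NNPP => bad_i; apply: none_bad; exists i.
  by rewrite /bad rev_rcons -rcons_cat.
pose z := code_stream t.
pose s0 : stack 2 := (prepend (codes u) z, Z.of_nat (size (codes u))).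
pose t0 : stack 2 := (prepend (codes (rev v)) z, Z.of_nat (size (codes (rev v)))).
have /lang_rel_embed [w' w'y rel_w'] : lang_rel (sval (embed y)) s0 t0.
  by apply: rel_uv_y; apply/word_rel_encode_qp; exists (z, 0%Z).
have nf_le : rle rho (nf_val (nf w')) y.
  apply: (rle_congl rhoR (cong_sym rhoR (cong_nf rhoR rhoB w'))).
  by apply: (rle_incl rhoR) => _ ->.
have : lang_rel (sval (embed (nf_val (nf w')))) s0 t0.
  by apply/rel_equiv_embed_nf; rewrite embed_word; apply/lang_rel_word.
case: (nf w') nf_le => [[u' vr']|] nf_le; last by case=> ? [? []].
rewrite embed_word => /lang_rel_word /encode_qp_rel_cases.
case=> [[s us vs]|[s [z' [u's v's z_s]]]].
  apply: not_le; rewrite us vs.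
  exact: (rle_trans rhoR (rle_extend rhoR rhoB u' (rev vr') s) nf_le).
have s_t : s = mkseq t (size s).
  apply: (prepend_codes_inj (z1 := z') (esym (size_mkseq _ _))); rewrite -z_s.
  exact: code_stream_prefix m_gt1 _ _.
by apply: (bad_t (size s)); rewrite -s_t -u's -v's.
Qed.

Lemma rle_of_embed_rel (x y : RL m) :
  (forall s t, lang_rel (sval (embed x)) s t -> lang_rel (sval (embed y)) s t) -> rle rho x y.
Proof.
move=> rel_xy; apply: (rle_words rhoR) => w xw.
apply: (rle_congl rhoR (cong_nf rhoR rhoB w)).
have rel_nf_y s t :
    lang_rel (sval (embed (nf_val (nf w)))) s t -> lang_rel (sval (embed y)) s t.
  move/rel_equiv_embed_nf; rewrite embed_word => /lang_rel_word rel_w.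
  by apply: rel_xy; apply/lang_rel_embed; exists w.
case: (nf w) rel_nf_y => [[u vr]|] rel_nf_y /=; last exact: rle0.
apply: rle_qp_of_embed_rel => s t rel_uv; apply: rel_nf_y.
by rewrite embed_word; apply/lang_rel_word.
Qed.

End AnyCongruence.

Lemma embed_inj : C_injective (@embed m).
Proof.
move=> x y /rho_k_rel_equiv xy rho rhoR rhoB.
by apply: (rle_anti rhoR); apply: rle_of_embed_rel => // s t; rewrite xy.
Qed.

End Faithfulness.

Theorem proposition6 (m : nat) : 2 < m ->
  exists g : RL m -> RL 2,
    [/\ R_morphism g, C_injective g,
        (forall i j : 'I_m, rho_k (rmul (g (rp i)) (g (rq j))) (if i == j then rone 2 else rzero 2))
      & rho_k (g (sum_qp m)) (rone 2)].
Proof.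
move=> m_gt2; have m_gt1 : 1 < m by apply: ltnW.
have m_gt0 : 0 < m by apply: ltnW.
exists (@embed m); split.
- exact: rsubst_R_morphism (embed_braket m_gt0).
- exact: embed_inj.
- exact: cong_embed_braket (@rho_k_Rcong 2) (@rho_k_braket 2).
- exact: cong_embed_sum (@rho_k_Rcong 2) (@rho_k_braket 2) m_gt0.
Qed.
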